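(* Let $A,M\in\mathbb{C}^{n\times n}$ be Hermitian positive definite. Let $V_r=[\bm v_{r,1},\dots,\bm v_{r,n}]$ be an invertible matrix with $AV_r=MV_r\Lambda$, $\Lambda=\mathrm{diag}(\lambda_1,\dots,\lambda_n)$, such that $V_r^*AV_r$ and $V_r^*MV_r$ are diagonal, with $|1-\lambda_1|\ge\cdots\ge|1-\lambda_n|\ge0$. Fix $n_c\in\{1,\dots,n\}$ and let $P_\sharp\in\mathbb{C}^{n\times n_c}$ satisfy $\mathrm{range}(P_\sharp)=\mathrm{span}\{\bm v_{r,1},\dots,\bm v_{r,n_c}\}$. Then for all integers $\nu_1,\nu_2\ge0$, $$P_\sharp\in\operatorname*{argmin}_{P\in\mathbb{C}^{n\times n_c}}\|E_{\rm TG}^{\nu_1,\nu_2}(P,P)\|_A\quad\text{and}\quad P_\sharp\in\operatorname*{argmin}_{P\in\mathbb{C}^{n\times n_c}}\|E_{\rm TG}^{\nu_1,\nu_2}(P,P)\|_M$$ (minima over $P$ with $P^*AP$ invertible), and, if $n_c<n$, $$\|E_{\rm TG}^{\nu_1,\nu_2}(P_\sharp,P_\sharp)\|_A=\|E_{\rm TG}^{\nu_1,\nu_2}(P_\sharp,P_\sharp)\|_M=|1-\lambda_{n_c+1}|^{\nu_1+\nu_2}.$$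
   Context: For $P,R\in\mathbb{C}^{n\times n_c}$ with $R^*AP$ invertible, $\Pi(P,R)=P(R^*AP)^{-1}R^*A$ and $E_{\rm TG}^{\nu_1,\nu_2}(P,R)=(I-M^{-1}A)^{\nu_2}(I-\Pi(P,R))(I-M^{-1}A)^{\nu_1}$. For Hermitian positive definite $S$, $\|x\|_S=(x^*Sx)^{1/2}$ and $\|Z\|_S=\max_{x\ne0}\|Zx\|_S/\|x\|_S$. *)

(* matrices over C := R[i] (mathcomp-real-closed complex numbers)
   with R : realType (MathComp-Analysis reals), so that operator norms can be
   defined as suprema. *)
From HB Require Import structures.
From mathcomp Require Import all_boot all_order all_algebra.
From mathcomp Require Import complex.
From mathcomp Require Import boolp classical_sets reals.
Set Implicit Arguments. Unset Strict Implicit. Unset Printing Implicit Defensive.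
Import Order.TTheory GRing.Theory Num.Theory.
Local Open Scope ring_scope.
Local Open Scope classical_set_scope.

Section Defs.
Variable R : realType.
Local Notation C := R[i].

Definition ctmx (m n : nat) (A : 'M[C]_(m, n)) : 'M[C]_(n, m) :=
  (map_mx (@conjc R) A)^T.

Definition hermitian (n : nat) (A : 'M[C]_n) : Prop := ctmx A = A.

Definition hpd (n : nat) (A : 'M[C]_n) : Prop :=
  hermitian A /\ forall x : 'cV[C]_n, x != 0 -> 0 < (ctmx x *m A *m x) 0 0.

Definition mxpow (n : nat) (A : 'M[C]_n) (k : nat) : 'M[C]_n :=
  iter k (mulmx A) 1%:M.

Definition Pi (n nc : nat) (A : 'M[C]_n) (P Q : 'M[C]_(n, nc)) : 'M[C]_n :=
  P *m invmx (ctmx Q *m A *m P) *m ctmx Q *m A.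

Definition ETG (n nc : nat) (A M : 'M[C]_n) (nu1 nu2 : nat)
    (P Q : 'M[C]_(n, nc)) : 'M[C]_n :=
  mxpow (1%:M - invmx M *m A) nu2 *m (1%:M - Pi A P Q)
    *m mxpow (1%:M - invmx M *m A) nu1.

Definition vnorm (n : nat) (S : 'M[C]_n) (x : 'cV[C]_n) : R :=
  Num.sqrt (complex.Re ((ctmx x *m S *m x) 0 0)).

Definition opnorm (n : nat) (S Z : 'M[C]_n) : R :=
  reals.sup [set vnorm S (Z *m x) / vnorm S x | x in [set x : 'cV[C]_n | x != 0]].

End Defs.

From HB Require Import structures.
From mathcomp Require Import all_boot all_order all_algebra.
From mathcomp Require Import complex.
From mathcomp Require Import boolp classical_sets reals.
From mathcomp Require Import ring.
Import Order.TTheory GRing.Theory Num.Theory.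
Local Open Scope ring_scope.
Local Open Scope complex_scope.
Set Implicit Arguments. Unset Strict Implicit. Unset Printing Implicit Defensive.

(* Everything happens in the eigenbasis [Vr]. It is orthogonal for both [A]
   and [M], so the [A]- and [M]-norms of [Vr c] are weighted Euclidean norms
   of [c], and the smoother [I - M^-1 A] acts on it diagonally by
   [mu_i = 1 - lam_i] (indices are 0-based, so the paper's [lambda_(nc+1)] is
   [lam_nc]). The columns of [Psh] span the first [nc] eigenvectors, which are
   [A]-orthogonal to the others, so [Pi(Psh, Psh)] is the coordinate
   projection onto them and [E_TG(Psh, Psh)] is diagonal with entries
   [mu_i^(nu1+nu2)] for [i >= nc] and [0] otherwise: its norm is at most
   [|mu_nc|^(nu1+nu2)]. Conversely, for any [P] the [nc] linear conditions
   [P^* A (I - M^-1 A)^nu1 x = 0] have a nonzero solution [x] in the span of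
   the first [nc + 1] eigenvectors; the coarse correction does not act on the
   pre-smoothed [x], so [E_TG(P, P) x] is [x] smoothed [nu1 + nu2] times, whose
   norm is at least [|mu_nc|^(nu1+nu2)] times that of [x]. *)

Lemma sqr_sum_le (R : numDomainType) n (u : 'I_n -> R) :
  (forall i, 0 <= u i) -> (\sum_i u i) ^+ 2 <= n%:R * \sum_i u i ^+ 2.
Proof.
move=> u0; have amgm i j : u i * u j *+ 2 <= u i ^+ 2 + u j ^+ 2.
  have -> : u i ^+ 2 + u j ^+ 2 = u i * u j *+ 2 + (u i - u j) ^+ 2.
    by rewrite sqrrB; ring.
  by rewrite lerDl -real_normK ?exprn_ge0 // realB ?ger0_real.
rewrite -(ler_pMn2r (n := 2)) //.
have -> : (\sum_i u i) ^+ 2 *+ 2 = \sum_i \sum_j u i * u j *+ 2.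
  rewrite expr2 mulr_suml -sumrMnl; apply: eq_bigr => i _.
  by rewrite mulr_sumr sumrMnl.
apply: le_trans (_ : \sum_i \sum_j (u i ^+ 2 + u j ^+ 2) <= _).
  by apply: ler_sum => i _; apply: ler_sum => j _; apply: amgm.
under eq_bigr do rewrite big_split /= sumr_const card_ord.
by rewrite big_split /= sumr_const card_ord sumrMnl mulr_natl mulr2n.
Qed.

Lemma mulmx_unit_eq0 (F : fieldType) n p (V : 'M[F]_n) (c : 'M[F]_(n, p)) :
  V \in unitmx -> (V *m c == 0) = (c == 0).
Proof.
move=> unitV; apply/eqP/eqP => [Vc0|->]; last exact: mulmx0.
by rewrite -(mulKmx unitV c) Vc0 mulmx0.
Qed.

Lemma col_submxP (F : fieldType) m1 m2 n (X : 'M[F]_(n, m1)) (Y : 'M[F]_(n, m2)) :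
  (X^T <= Y^T)%MS -> exists D, X = Y *m D.
Proof. by case/submxP => D /(congr1 trmx); rewrite trmx_mul !trmxK => ->; exists D^T. Qed.

Lemma exists_kernel_vector (F : fieldType) m k (K : 'M[F]_(m, k)) :
  (m < k)%N -> exists2 c : 'cV_k, c != 0 & K *m c = 0.
Proof.
move=> mk; have : kermx K^T != 0.
  by rewrite -mxrank_eq0 mxrank_ker subn_eq0 -ltnNge (leq_ltn_trans (rank_leq_col _)).
case/rowV0Pn => v /sub_kermxP vK v0; exists v^T; first by rewrite trmx_eq0.
by rewrite -[K]trmxK -trmx_mul vK trmx0.
Qed.

Lemma copid_mx_diag (F : pzRingType) n r :
  copid_mx r = diag_mx (\row_i (r <= i)%:R) :> 'M[F]_n.
Proof.
apply/matrixP => i j; rewrite !mxE.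
have [<-|ij] := eqVneq i j; last by rewrite val_eqE (negPf ij) subr0 mulr0n.
by rewrite eqxx mulr1n; case: ltnP; rewrite ?subrr ?subr0.
Qed.

Lemma delta_mx_neq0 (F : nzRingType) m n (i : 'I_m) (j : 'I_n) :
  delta_mx i j != 0 :> 'M[F]_(m, n).
Proof. by apply/eqP => /matrixP/(_ i j)/eqP; rewrite !mxE !eqxx oner_eq0. Qed.

Section ConjugateTranspose.
Variable R : realType.
Local Notation C := R[i].

Lemma ctmx_mul m n p (X : 'M[C]_(m, n)) (Y : 'M[C]_(n, p)) :
  ctmx (X *m Y) = ctmx Y *m ctmx X.
Proof. by rewrite /ctmx map_mxM trmx_mul. Qed.

Lemma ctmx_pid m n r : ctmx (pid_mx r : 'M[C]_(m, n)) = pid_mx r.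
Proof. by rewrite /ctmx map_pid_mx tr_pid_mx. Qed.

End ConjugateTranspose.

Section QuadraticForm.
Variable R : realType.
Local Notation C := R[i].

Definition qform n (S : 'M[C]_n) (x : 'cV[C]_n) : C := (ctmx x *m S *m x) 0 0.

Lemma qform0 n (S : 'M[C]_n) : qform S 0 = 0.
Proof. by rewrite /qform mulmx0 mxE. Qed.

Lemma qform_gram m n (S : 'M[C]_n) (P : 'M[C]_(n, m)) y :
  qform (ctmx P *m S *m P) y = qform S (P *m y).
Proof. by rewrite /qform ctmx_mul !mulmxA. Qed.

Lemma hpd_qform_ge0 n (S : 'M[C]_n) x : hpd S -> 0 <= qform S x.
Proof.
case=> _ Spos; have [->|x0] := eqVneq x 0; first by rewrite qform0.
exact/ltW/Spos.
Qed.

Lemma qform_gt0_unitmx n (S : 'M[C]_n) :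
  (forall x, x != 0 -> 0 < qform S x) -> S \in unitmx.
Proof.
move=> Spos; rewrite -unitmx_tr -row_free_unit; apply: inj_row_free => v vS0.
apply/eqP; rewrite -trmx_eq0; apply/negPn/negP => /Spos.
by rewrite /qform -mulmxA -[S]trmxK -trmx_mul vS0 trmx0 mulmx0 mxE ltxx.
Qed.

Lemma hpd_gram_unitmx m n (S : 'M[C]_n) (P : 'M[C]_(n, m)) :
  hpd S -> row_free P^T -> ctmx P *m S *m P \in unitmx.
Proof.
case=> _ Spos Pfree; apply: qform_gt0_unitmx => y y0; rewrite qform_gram.
by apply: Spos; rewrite -trmx_eq0 trmx_mul mulmx_free_eq0 // trmx_eq0.
Qed.

Lemma qform_eigen n (S V : 'M[C]_n) (d : 'rV[C]_n) (c : 'cV[C]_n) :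
  ctmx V *m S *m V = diag_mx d -> qform S (V *m c) = \sum_i d 0 i * `|c i 0| ^+ 2.
Proof.
move=> VSV; rewrite -qform_gram VSV /qform mul_mx_diag mxE.
by apply: eq_bigr => j _; rewrite !mxE normCKC mulrAC mulrC.
Qed.

End QuadraticForm.

Section RealPart.
Variable R : realType.

Lemma complex_ge0E (z : R[i]) : 0 <= z -> z = (complex.Re z)%:C.
Proof. by move=> z0; rewrite RRe_real ?ger0_real. Qed.

Lemma Re_ge0 (z : R[i]) : 0 <= z -> 0 <= complex.Re z.
Proof. by move=> z0; rewrite -ler0c -complex_ge0E. Qed.

End RealPart.

Section OperatorNorm.
Variables (R : realType) (n : nat) (S : 'M[R[i]]_n).
Hypothesis hS : hpd S.

Lemma qformE x : qform S x = (vnorm S x ^+ 2)%:C.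
Proof.
have q0 := hpd_qform_ge0 x hS.
by rewrite /vnorm sqr_sqrtr ?Re_ge0 // -complex_ge0E.
Qed.

Lemma vnorm_gt0 x : x != 0 -> 0 < vnorm S x.
Proof.
move=> x0; have := hS.2 x x0; rewrite -/(qform S x) qformE ltcR lt0r sqrf_eq0.
case/andP => v0 _.
by rewrite lt0r v0 sqrtr_ge0.
Qed.

Lemma vnorm_le_qform y x (s : R) : 0 <= s ->
  (vnorm S y <= s * vnorm S x) = (qform S y <= (s%:C) ^+ 2 * qform S x).
Proof.
move=> s0; rewrite !qformE -rmorphXn -rmorphM lecR -exprMn.
by rewrite ler_pXn2r // nnegrE ?mulr_ge0 ?sqrtr_ge0.
Qed.

Lemma vnorm_ge_qform y x (s : R) : 0 <= s ->
  (s * vnorm S x <= vnorm S y) = ((s%:C) ^+ 2 * qform S x <= qform S y).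
Proof.
move=> s0; rewrite !qformE -rmorphXn -rmorphM lecR -exprMn.
by rewrite ler_pXn2r // nnegrE ?mulr_ge0 ?sqrtr_ge0.
Qed.

Lemma opnorm_le (Z : 'M[R[i]]_n) (r : R[i]) : 0 <= r ->
  (forall x, qform S (Z *m x) <= r ^+ 2 * qform S x) -> (opnorm S Z)%:C <= r.
Proof.
move=> r0 Zr; rewrite [r]complex_ge0E // lecR /opnorm; set E := (X in reals.sup X).
have [->|/set0P ne] := eqVneq E set0; first by rewrite sup0 Re_ge0.
apply: ge_sup => // _ [x x0 <-]; rewrite ler_pdivrMr ?vnorm_gt0 //.
by rewrite vnorm_le_qform ?Re_ge0 // -complex_ge0E.
Qed.

(* [reals.sup] of a set that is not bounded above is [0], hence the
   boundedness hypothesis. *)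
Lemma opnorm_ge (Z : 'M[R[i]]_n) (r : R[i]) x :
  (exists2 k : R[i], 0 <= k & forall x, qform S (Z *m x) <= k * qform S x) ->
  0 <= r -> x != 0 -> r ^+ 2 * qform S x <= qform S (Z *m x) -> r <= (opnorm S Z)%:C.
Proof.
move=> [k k0 Zk] r0 x0 rZ.
rewrite [r]complex_ge0E // lecR /opnorm; set E := (X in reals.sup X).
have ub : ubound E (Num.sqrt (complex.Re k)).
  move=> _ [y y0 <-]; rewrite ler_pdivrMr ?vnorm_gt0 // vnorm_le_qform ?sqrtr_ge0 //.
  by rewrite -rmorphXn /= sqr_sqrtr ?Re_ge0 // -complex_ge0E.
apply: le_trans (sup_upper_bound _ _); last 2 first.
- by split; [exists (vnorm S (Z *m x) / vnorm S x), x | exists (Num.sqrt (complex.Re k))].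
- by exists x.
by rewrite ler_pdivlMr ?vnorm_gt0 // vnorm_ge_qform ?Re_ge0 // -complex_ge0E.
Qed.

End OperatorNorm.

Section Eigenbasis.
Variables (R : realType) (n : nat) (S V : 'M[R[i]]_n) (d : 'rV[R[i]]_n).
Hypotheses (hS : hpd S) (unitV : V \in unitmx) (VSV : ctmx V *m S *m V = diag_mx d).

Lemma eigen_weight_gt0 i : 0 < d 0 i.
Proof.
have := hS.2 (V *m delta_mx i 0); rewrite mulmx_unit_eq0 // delta_mx_neq0.
move=> /(_ isT); rewrite -/(qform _ _) (qform_eigen _ VSV) (bigD1 i) //= big1 ?addr0.
  by rewrite !mxE !eqxx normr1 expr1n mulr1.
by move=> j /negPf ji; rewrite !mxE ji normr0 expr0n mulr0.
Qed.

Lemma qform_diag_le (g : 'rV[R[i]]_n) (r : R[i]) (c : 'cV[R[i]]_n) :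
  (forall i, `|g 0 i| <= r) ->
  qform S (V *m (diag_mx g *m c)) <= r ^+ 2 * qform S (V *m c).
Proof.
move=> gr; rewrite !(qform_eigen _ VSV) mulr_sumr; apply: ler_sum => i _.
rewrite mul_diag_mx mxE normrM exprMn mulrCA ler_wpM2r //.
  by rewrite mulr_ge0 ?exprn_ge0 // ltW ?eigen_weight_gt0.
by apply: lerXn2r; rewrite ?nnegrE ?(le_trans _ (gr i)).
Qed.

Lemma qform_diag_ge (g : 'rV[R[i]]_n) (r : R[i]) (c : 'cV[R[i]]_n) : 0 <= r ->
  (forall i, c i 0 != 0 -> r <= `|g 0 i|) ->
  r ^+ 2 * qform S (V *m c) <= qform S (V *m (diag_mx g *m c)).
Proof.
move=> r0 gr; rewrite !(qform_eigen _ VSV) mulr_sumr; apply: ler_sum => i _.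
rewrite mul_diag_mx mxE normrM exprMn.
have [->|ci0] := eqVneq (c i 0) 0; first by rewrite normr0 expr0n /= !mulr0.
rewrite mulrCA; apply: ler_wpM2l; first exact/ltW/eigen_weight_gt0.
apply: ler_wpM2r; first exact: exprn_ge0.
by apply: lerXn2r; rewrite ?nnegrE ?gr.
Qed.

Lemma qform_bounded Z :
  exists2 k, 0 <= k & forall x, qform S (Z *m x) <= k * qform S x.
Proof.
have d0 := eigen_weight_gt0.
pose B := invmx V *m Z *m V.
pose L := \sum_i \sum_j `|B i j| ^+ 2 / d 0 j.
have term_ge0 k l : 0 <= `|B k l| ^+ 2 / d 0 l.
  by rewrite divr_ge0 ?exprn_ge0 ?(ltW (d0 l)).
have coef_le i j : `|B i j| ^+ 2 / d 0 j <= L.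
  rewrite /L (bigD1 i) //= (bigD1 j) //= -addrA lerDl.
  by apply: addr_ge0; do ![apply: sumr_ge0 => ? _].
have L0 : 0 <= L by do ![apply: sumr_ge0 => ? _].
exists ((\sum_i d 0 i) * (n%:R * L)).
  by rewrite !mulr_ge0 ?ler0n // sumr_ge0 // => i _; apply: ltW.
move=> x; rewrite -(mulKVmx unitV x); set c := invmx V *m x.
have -> : Z *m (V *m c) = V *m (B *m c) by rewrite /B !mulmxA mulmxV ?mul1mx.
rewrite !(qform_eigen _ VSV); set t := \sum_i d 0 i * `|c i 0| ^+ 2.
have row_le i : `|(B *m c) i 0| ^+ 2 <= n%:R * (L * t).
  rewrite mxE; apply: le_trans (_ : (\sum_j `|B i j| * `|c j 0|) ^+ 2 <= _).
    apply: lerXn2r; rewrite ?nnegrE //.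
      by apply: sumr_ge0 => j _; exact: mulr_ge0.
    by apply: le_trans (ler_norm_sum _ _ _) _; apply: ler_sum => j _; rewrite normrM.
  apply: le_trans (sqr_sum_le _) _ => [j|]; first by rewrite mulr_ge0.
  rewrite ler_wpM2l ?ler0n // mulr_sumr; apply: ler_sum => j _.
  have -> : (`|B i j| * `|c j 0|) ^+ 2 = `|B i j| ^+ 2 / d 0 j * (d 0 j * `|c j 0| ^+ 2).
    by rewrite exprMn [RHS]mulrA divfK ?lt0r_neq0.
  by apply: ler_wpM2r; rewrite ?coef_le // mulr_ge0 ?exprn_ge0 ?(ltW (d0 j)).
rewrite -mulrA mulr_suml; apply: ler_sum => i _.
by apply: ler_wpM2l; [exact/ltW/d0 | rewrite -mulrA row_le].
Qed.

Lemma opnorm_eigen_le Z (g : 'rV[R[i]]_n) (r : R[i]) :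
  Z *m V = V *m diag_mx g -> 0 <= r -> (forall i, `|g 0 i| <= r) ->
  (opnorm S Z)%:C <= r.
Proof.
move=> ZV r0 gr; apply: opnorm_le => // x.
rewrite -(mulKVmx unitV x); set c := invmx V *m x.
by rewrite mulmxA ZV -mulmxA qform_diag_le.
Qed.

Lemma opnorm_ge0 Z : (0 < n)%N -> 0 <= opnorm S Z.
Proof.
move=> n0; have x0 : delta_mx (Ordinal n0) 0 != 0 :> 'cV[R[i]]_n := delta_mx_neq0 _ _ _.
rewrite -lecR (opnorm_ge hS (qform_bounded Z) _ x0) //.
by rewrite expr0n mul0r hpd_qform_ge0.
Qed.

End Eigenbasis.

Section Projection.
Variables (R : realType) (n m : nat) (A : 'M[R[i]]_n).

Lemma Pi_id (P : 'M[R[i]]_(n, m)) p (X : 'M_(m, p)) :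
  ctmx P *m A *m P \in unitmx -> Pi A P P *m (P *m X) = P *m X.
Proof.
move=> unitG; have -> : Pi A P P *m (P *m X) =
  P *m (invmx (ctmx P *m A *m P) *m (ctmx P *m A *m P)) *m X by rewrite /Pi !mulmxA.
by rewrite mulVmx // mulmx1.
Qed.

Lemma Pi_eq0 (P Q : 'M[R[i]]_(n, m)) p (v : 'M_(n, p)) :
  ctmx Q *m A *m v = 0 -> Pi A P Q *m v = 0.
Proof.
move=> Qv; have -> : Pi A P Q *m v = P *m invmx (ctmx Q *m A *m P) *m (ctmx Q *m A *m v).
  by rewrite /Pi !mulmxA.
by rewrite Qv mulmx0.
Qed.

End Projection.

Section Smoother.
Variables (R : realType) (n : nat).

Lemma mxpow_eigen (T V : 'M[R[i]]_n) (mu : 'rV_n) k :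
  T *m V = V *m diag_mx mu -> mxpow T k *m V = V *m diag_mx (\row_i (mu 0 i ^+ k)).
Proof.
move=> TV; elim: k => [|k IHk].
  rewrite mul1mx -[LHS]mulmx1 -diag_const_mx; congr (_ *m diag_mx _).
  by apply/matrixP => i j; rewrite !mxE.
rewrite -mulmxA IHk mulmxA TV -mulmxA mulmx_diag; congr (_ *m diag_mx _).
by apply/matrixP => i j; rewrite !mxE exprS.
Qed.

Lemma smoother_eigen (A M V : 'M[R[i]]_n) (lam : 'rV_n) :
  M \in unitmx -> A *m V = M *m V *m diag_mx lam ->
  (1%:M - invmx M *m A) *m V = V *m diag_mx (\row_i (1 - lam 0 i)).
Proof.
move=> unitM AV; rewrite mulmxBl mul1mx -mulmxA AV -mulmxA mulKmx //.
rewrite -{1}[V]mulmx1 -mulmxBr; congr (_ *m _).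
apply/matrixP => i j; rewrite !mxE.
by have [->|ij] := eqVneq i j; rewrite ?mulr1n ?mulr0n ?subr0.
Qed.

End Smoother.

Section TwoGrid.
Variables (R : realType) (n nc : nat) (A M Vr : 'M[R[i]]_n) (mu : 'rV[R[i]]_n).
Variables (nu1 nu2 : nat).
Hypotheses (unitVr : Vr \in unitmx)
  (smootherVr : (1%:M - invmx M *m A) *m Vr = Vr *m diag_mx mu)
  (mu_sorted : forall i j : 'I_n, (i <= j)%N -> `|mu 0 j| <= `|mu 0 i|).

Local Notation T := (1%:M - invmx M *m A).
Local Notation E P := (ETG A M nu1 nu2 P P).

Lemma mxpow_smoother_eigen : mxpow T nu2 *m (mxpow T nu1 *m Vr) =
  Vr *m diag_mx (\row_i (mu 0 i ^+ nu2 * mu 0 i ^+ nu1)).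
Proof.
rewrite (mxpow_eigen nu1 smootherVr) mulmxA (mxpow_eigen nu2 smootherVr).
rewrite -mulmxA mulmx_diag.
by congr (_ *m diag_mx _); apply/matrixP => i j; rewrite !mxE.
Qed.

Lemma ETG_lower_bound (nc_lt_n : (nc < n)%N) (S : 'M[R[i]]_n) (d : 'rV_n)
    (P : 'M[R[i]]_(n, nc)) :
  hpd S -> ctmx Vr *m S *m Vr = diag_mx d ->
  exists2 x, x != 0 &
    (`|mu 0 (Ordinal nc_lt_n)| ^+ (nu1 + nu2)) ^+ 2 * qform S x <= qform S (E P *m x).
Proof.
move=> hS VSV.
pose K : 'M_(nc, nc.+1) := ctmx P *m A *m (mxpow T nu1 *m Vr *m pid_mx nc.+1).
have [c' c'0 Kc'] := exists_kernel_vector K (ltnSn nc).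
pose c : 'cV_n := pid_mx nc.+1 *m c'.
have c_out (i : 'I_n) : (nc < i)%N -> c i 0 = 0.
  by move=> nc_i; rewrite mxE big1 // => j _; rewrite mxE ltnNge nc_i andbF mul0r.
exists (Vr *m c).
  rewrite mulmx_unit_eq0 //; apply: contra c'0 => /eqP c0.
  have pidK : (pid_mx nc.+1 : 'M[R[i]]_(nc.+1, n)) *m pid_mx nc.+1 = 1%:M.
    by rewrite pid_mx_id // pid_mx_1.
  by rewrite -[c']mul1mx -pidK -mulmxA -/c c0 mulmx0.
have PiTc : Pi A P P *m (mxpow T nu1 *m (Vr *m c)) = 0.
  by apply: Pi_eq0; rewrite -Kc' /c /K !mulmxA.
rewrite /ETG -!mulmxA mulmxBl mul1mx PiTc subr0 !mulmxA -(mulmxA _ _ Vr).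
rewrite mxpow_smoother_eigen -!mulmxA -/c.
apply: (qform_diag_ge hS unitVr VSV) => [|i ci0]; first exact: exprn_ge0.
have i_le_nc : (i <= nc)%N by rewrite leqNgt; apply: contra ci0 => /c_out ->.
rewrite mxE normrM !normrX -exprD addnC.
by apply: lerXn2r; rewrite ?nnegrE // mu_sorted.
Qed.

Lemma opnorm_ETG_ge (nc_lt_n : (nc < n)%N) (S : 'M[R[i]]_n) (P : 'M[R[i]]_(n, nc)) :
  hpd S -> is_diag_mx (ctmx Vr *m S *m Vr) ->
  `|mu 0 (Ordinal nc_lt_n)| ^+ (nu1 + nu2) <= (opnorm S (E P))%:C.
Proof.
move=> hS /diag_mxP [d VSV]; have [x x0 lb] := ETG_lower_bound nc_lt_n P hS VSV.
exact: (opnorm_ge hS (qform_bounded hS unitVr VSV _) (exprn_ge0 _ (normr_ge0 _)) x0 lb).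
Qed.

Variables (Psh : 'M[R[i]]_(n, nc)) (nc_le_n : (nc <= n)%N).
Hypotheses (hA : hpd A) (VAV_diag : is_diag_mx (ctmx Vr *m A *m Vr))
  (Psh_span : (Psh^T == \matrix_(k < nc, l < n) Vr l (widen_ord nc_le_n k))%MS).

Local Notation W := (Vr *m (pid_mx nc : 'M[R[i]]_(n, nc))).

Lemma Psh_span_pid : (Psh^T == W^T)%MS.
Proof.
suff -> : W^T = \matrix_(k < nc, l < n) Vr l (widen_ord nc_le_n k) by [].
apply/matrixP => k l; rewrite !mxE (bigD1 (widen_ord nc_le_n k)) //= mxE eqxx /=.
rewrite ltn_ord mulr1 big1 ?addr0 // => j jk.
by have /negPf jk' : (j : nat) != k := jk; rewrite mxE jk' mulr0.
Qed.

Lemma Psh_row_free : row_free Psh^T.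
Proof.
rewrite /row_free (eqmx_rank Psh_span_pid) trmx_mul.
rewrite mxrankMfree ?row_free_unit ?unitmx_tr //.
by rewrite mxrank_tr rank_pid_mx.
Qed.

Lemma gram_sharp_unitmx : ctmx Psh *m A *m Psh \in unitmx.
Proof. exact: hpd_gram_unitmx hA Psh_row_free. Qed.

Lemma Pi_sharp_eigen : Pi A Psh Psh *m Vr = Vr *m pid_mx nc.
Proof.
have /andP [sPW sWP] := Psh_span_pid.
have [[Y PshE] [X WE]] := (col_submxP sPW, col_submxP sWP).
have [dA VAV] := diag_mxP _ VAV_diag.
have Pi_copid : Pi A Psh Psh *m (Vr *m copid_mx nc) = 0.
  apply: Pi_eq0; rewrite {1}PshE !ctmx_mul ctmx_pid.
  have -> : ctmx Y *m (pid_mx nc *m ctmx Vr) *m A *m (Vr *m copid_mx nc) =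
    ctmx Y *m (pid_mx nc *m (ctmx Vr *m A *m Vr) *m copid_mx nc) by rewrite !mulmxA.
  rewrite VAV copid_mx_diag -mulmxA diag_mx_comm mulmxA -copid_mx_diag.
  by rewrite mulmxA -(mulmxA (ctmx Y)) mul_pid_mx_copid // mulmx0 mul0mx.
have pid_factor : Vr *m (pid_mx nc : 'M_n) = W *m pid_mx nc.
  by rewrite -mulmxA mul_pid_mx !minnn.
rewrite -{1}[Vr]mulmx1 -(subrK (pid_mx nc) 1%:M) -/(copid_mx nc) addrC mulmxDr mulmxDr.
by rewrite Pi_copid addr0 pid_factor WE -(mulmxA Psh) Pi_id // gram_sharp_unitmx.
Qed.

Lemma ETG_sharp_eigen : E Psh *m Vr =
  Vr *m diag_mx (\row_i (mu 0 i ^+ nu2 * (nc <= i)%:R * mu 0 i ^+ nu1)).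
Proof.
rewrite /ETG -mulmxA (mxpow_eigen nu1 smootherVr) mulmxA -(mulmxA _ _ Vr).
rewrite mulmxBl mul1mx Pi_sharp_eigen -{1}[Vr]mulmx1 -mulmxBr -/(copid_mx nc).
rewrite mulmxA (mxpow_eigen nu2 smootherVr) copid_mx_diag -!mulmxA !mulmx_diag.
by congr (_ *m diag_mx _); apply/matrixP => i j; rewrite !mxE mulrA.
Qed.

Lemma opnorm_ETG_sharp_le (nc_lt_n : (nc < n)%N) (S : 'M[R[i]]_n) :
  hpd S -> is_diag_mx (ctmx Vr *m S *m Vr) ->
  (opnorm S (E Psh))%:C <= `|mu 0 (Ordinal nc_lt_n)| ^+ (nu1 + nu2).
Proof.
move=> hS /diag_mxP [d VSV].
apply: (opnorm_eigen_le hS unitVr VSV ETG_sharp_eigen) => [|i]; first exact: exprn_ge0.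
rewrite mxE; case: leqP => [nc_i|_]; last by rewrite mulr0 mul0r normr0 exprn_ge0.
rewrite mulr1 normrM !normrX -exprD addnC.
by apply: lerXn2r; rewrite ?nnegrE // mu_sorted.
Qed.

Lemma opnorm_ETG_sharp (nc_lt_n : (nc < n)%N) (S : 'M[R[i]]_n) :
  hpd S -> is_diag_mx (ctmx Vr *m S *m Vr) ->
  (opnorm S (E Psh))%:C = `|mu 0 (Ordinal nc_lt_n)| ^+ (nu1 + nu2).
Proof.
move=> hS hdS; apply/le_anti.
by rewrite opnorm_ETG_sharp_le // (opnorm_ETG_ge nc_lt_n Psh hS hdS).
Qed.

Lemma opnorm_ETG_sharp_min (nc_gt0 : (0 < nc)%N) (S : 'M[R[i]]_n) (P : 'M[R[i]]_(n, nc)) :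
  hpd S -> is_diag_mx (ctmx Vr *m S *m Vr) -> opnorm S (E Psh) <= opnorm S (E P).
Proof.
move=> hS hdS; rewrite -lecR; have [nc_lt_n | n_le_nc] := ltnP nc n.
  exact: le_trans (opnorm_ETG_sharp_le nc_lt_n hS hdS) (opnorm_ETG_ge nc_lt_n P hS hdS).
have [d VSV] := diag_mxP _ hdS.
apply: le_trans (_ : 0%:C <= _).
  apply: (opnorm_eigen_le hS unitVr VSV ETG_sharp_eigen) => // i.
  by rewrite mxE leqNgt (leq_trans (ltn_ord i) n_le_nc) mulr0 mul0r normr0.
by rewrite lecR (opnorm_ge0 hS unitVr VSV _ (leq_trans nc_gt0 nc_le_n)).
Qed.

End TwoGrid.

Unset Implicit Arguments.
Theorem corollary3p6 (R : realType) (n nc : nat)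
    (A M Vr : 'M[R[i]]_n) (lam : 'rV[R[i]]_n)
    (Hnc0 : (0 < nc)%N) (Hnc : (nc <= n)%N) (Psh : 'M[R[i]]_(n, nc)) :
  hpd A -> hpd M ->
  Vr \in unitmx ->
  A *m Vr = M *m Vr *m diag_mx lam ->
  is_diag_mx (ctmx Vr *m A *m Vr) ->
  is_diag_mx (ctmx Vr *m M *m Vr) ->
  (forall i j : 'I_n, (i <= j)%N -> `|1 - lam 0 j| <= `|1 - lam 0 i|) ->
  (* range(Psh) = span{v_{r,1},...,v_{r,nc}}: column spaces, written as
     row spaces of the transposes; row k of the right matrix is column k of Vr *)
  (Psh^T == \matrix_(k < nc, l < n) Vr l (widen_ord Hnc k))%MS ->
  forall nu1 nu2 : nat,
    [/\ (ctmx Psh *m A *m Psh) \in unitmx,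
        (forall P : 'M[R[i]]_(n, nc), (ctmx P *m A *m P) \in unitmx ->
           opnorm A (ETG A M nu1 nu2 Psh Psh) <= opnorm A (ETG A M nu1 nu2 P P)),
        (forall P : 'M[R[i]]_(n, nc), (ctmx P *m A *m P) \in unitmx ->
           opnorm M (ETG A M nu1 nu2 Psh Psh) <= opnorm M (ETG A M nu1 nu2 P P))
      & forall Hlt : (nc < n)%N,
          (opnorm A (ETG A M nu1 nu2 Psh Psh))%:C
            = `|1 - lam 0 (Ordinal Hlt)| ^+ (nu1 + nu2)
          /\ (opnorm M (ETG A M nu1 nu2 Psh Psh))%:C
            = `|1 - lam 0 (Ordinal Hlt)| ^+ (nu1 + nu2)].
Proof.
move=> hA hM unitVr AVr VAV_diag VMV_diag lam_sorted Psh_span nu1 nu2.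
have smootherVr := smoother_eigen (qform_gt0_unitmx hM.2) AVr.
have mu_sorted (i j : 'I_n) : (i <= j)%N ->
    `|(\row_k (1 - lam 0 k)) 0 j| <= `|(\row_k (1 - lam 0 k)) 0 i|.
  by rewrite !mxE; apply: lam_sorted.
have sharp_min :=
  opnorm_ETG_sharp_min nu1 nu2 unitVr smootherVr mu_sorted hA VAV_diag Psh_span Hnc0.
have sharp_eq :=
  opnorm_ETG_sharp nu1 nu2 unitVr smootherVr mu_sorted hA VAV_diag Psh_span.
have unit_gram := gram_sharp_unitmx unitVr hA Psh_span.
split.
- exact: unit_gram.
- move=> P _; exact: sharp_min P hA VAV_diag.
- move=> P _; exact: sharp_min P hM VMV_diag.
- move=> nc_lt_n; move: (sharp_eq nc_lt_n _ hA VAV_diag) (sharp_eq nc_lt_n _ hM VMV_diag).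
  rewrite !mxE; exact: conj.
Qed.
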